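(* Let $G_1=(g_{kj})$ and $G_2=(g'_{kj})$ be semi-normalized Gram matrices (for tuples of the same type $m,i$), represented by the vectors $V_{G_1},V_{G_2}\in\mathbb H^{t}$. Then $G_1$ and $G_2$ are equivalent (i.e. $G_1=D^*G_2D$ for some nonsingular diagonal quaternionic matrix $D$) if and only if $O_{V_{G_1}}=O_{V_{G_2}}$, where $O_V=\{\bar\mu V\mu:\mu\in\mathrm{Sp}(1)\}$.
   Context: Setting: $m\ge4$, $3\le i\le m$; tuples $p=(p_1,\dots,p_m)$ of distinct points of $\overline{\mathbf H^n_{\mathbb H}}$ with the first $i$ points in $\partial\mathbf H^n_{\mathbb H}$ and the rest in $\mathbf H^n_{\mathbb H}$, where $\mathbb H^{n,1}$ is the right quaternionic space $\mathbb H^{n+1}$ with form $\langle\mathbf z,\mathbf w\rangle=\bar w_{n+1}z_1+\bar w_2z_2+\cdots+\bar w_nz_n+\bar w_1z_{n+1}$. The Gram matrix of a lift $(\mathbf p_1,\dots,\mathbf p_m)$ is $g_{kj}=\langle\mathbf p_j,\mathbf p_k\rangle$; it is semi-normalized if $g_{kk}=0$ for $k\le i$, $g_{kk}=-1$ for $k>i$, $g_{1j}=1$ for $2\le j\le i$, $|g_{23}|=1$, and $g_{1j}=r_{1j}>0$ real for $i<j\le m$. Such a matrix is represented by $V_G=(r_{1(i+1)},\dots,r_{1m},g_{23},g_{24},\dots,g_{2m},g_{34},\dots,g_{3m},\dots,g_{(m-1)m})\in\mathbb H^{t}$, $t=\frac{m^2-m-2i+2}{2}$. $\mathrm{Sp}(1)$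 is the group of unit quaternions, acting on $\mathbb H^t$ componentwise by $V\mapsto\bar\mu V\mu$. *)

From HB Require Import structures.
From mathcomp Require Import all_boot all_order all_algebra.
From mathcomp Require Import reals.
Set Implicit Arguments. Unset Strict Implicit. Unset Printing Implicit Defensive.
Import Order.TTheory GRing.Theory Num.Theory.
Local Open Scope ring_scope.

(* Real quaternions  a0 + a1 i + a2 j + a3 k  over a real field R. *)
Record quat (R : Type) := Quat { q0 : R; q1 : R; q2 : R; q3 : R }.

Section Quat.
Variable R : realType.

Definition qzero : quat R := Quat 0 0 0 0.
Definition qone : quat R := Quat 1 0 0 0.
Definition qreal (r : R) : quat R := Quat r 0 0 0.
Definition qadd (a b : quat R) : quat R :=
  Quat (q0 a + q0 b) (q1 a + q1 b) (q2 a + q2 b) (q3 a + q3 b).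
Definition qmul (a b : quat R) : quat R :=
  Quat (q0 a * q0 b - q1 a * q1 b - q2 a * q2 b - q3 a * q3 b)
       (q0 a * q1 b + q1 a * q0 b + q2 a * q3 b - q3 a * q2 b)
       (q0 a * q2 b - q1 a * q3 b + q2 a * q0 b + q3 a * q1 b)
       (q0 a * q3 b + q1 a * q2 b - q2 a * q1 b + q3 a * q0 b).
Definition qconj (a : quat R) : quat R := Quat (q0 a) (- q1 a) (- q2 a) (- q3 a).
Definition qnormsq (a : quat R) : R :=
  q0 a ^+ 2 + q1 a ^+ 2 + q2 a ^+ 2 + q3 a ^+ 2.
Definition qsum (s : seq (quat R)) : quat R := foldr qadd qzero s.

(* Vectors of H^{n,1} = H^{n+1} (right quaternionic space), coordinates
   indexed 0..n (paper's z_1 .. z_{n+1}). *)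
Definition qvec (n : nat) := 'I_n.+1 -> quat R.

Definition swap_fl (n : nat) (l : 'I_n.+1) : 'I_n.+1 :=
  if val l == 0%N then (@ord_max n) else if val l == n then (@ord0 n) else l.

Definition hform (n : nat) (z w : qvec n) : quat R :=
  qsum [seq qmul (qconj (w (@swap_fl n l))) (z l) | l <- enum 'I_n.+1].

Definition vzero (n : nat) : qvec n := fun _ => qzero.
Definition vscale (n : nat) (z : qvec n) (lam : quat R) : qvec n :=
  fun l => qmul (z l) lam.

(* z is a lift of a point of the boundary of H^n_H (nonzero null vector) *)
Definition lift_boundary (n : nat) (z : qvec n) : Prop :=
  z <> @vzero n /\ hform (n:=n) z z = qzero.
(* z is a lift of a point of H^n_H (negative vector) *)
Definition lift_interior (n : nat) (z : qvec n) : Prop :=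
  exists x : R, x < 0 /\ hform (n:=n) z z = qreal x.

(* (p_1,...,p_m) is a lift of a tuple of distinct points of the closure of
   H^n_H, the first i of them on the boundary, the remaining ones inside. *)
Definition lifted_tuple (n m i : nat) (p : 'I_m -> qvec n) : Prop :=
  (forall k : 'I_m, (val k < i)%N -> lift_boundary (p k)) /\
  (forall k : 'I_m, (i <= val k)%N -> lift_interior (p k)) /\
  (forall k j : 'I_m, k <> j -> ~ exists lam : quat R, p k = vscale (p j) lam).

Definition gram (n m : nat) (p : 'I_m -> qvec n) : 'I_m -> 'I_m -> quat R :=
  fun k j => hform (p j) (p k).

(* semi-normalization conditions (indices shifted to start at 0) *)
Definition semi_normalized (m i : nat) (G : 'I_m -> 'I_m -> quat R) : Prop :=
  (forall k : 'I_m, (val k < i)%N -> G k k = qzero) /\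
  (forall k : 'I_m, (i <= val k)%N -> G k k = qreal (-1)) /\
  (forall k j : 'I_m, val k = 0%N -> (1 <= val j < i)%N -> G k j = qone) /\
  (forall k j : 'I_m, val k = 1%N -> val j = 2%N -> qnormsq (G k j) = 1) /\
  (forall k j : 'I_m, val k = 0%N -> (i <= val j)%N ->
       exists r : R, 0 < r /\ G k j = qreal r).

Definition semi_normalized_gram (n m i : nat) (G : 'I_m -> 'I_m -> quat R) :
    Prop :=
  exists p : 'I_m -> qvec n, @lifted_tuple n m i p /\
    (forall k j, G k j = @gram n m p k j) /\ @semi_normalized m i G.

(* V_G = (r_{1(i+1)},...,r_{1m}, g_{23},...,g_{2m}, g_{34},...,g_{(m-1)m}):
   row-major list of the entries (k,j) with k = 1, j > i, or 2 <= k < j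
   (1-based), i.e. 0-based: k = 0, j >= i, or 1 <= k < j. *)
Definition VG (m i : nat) (G : 'I_m -> 'I_m -> quat R) : seq (quat R) :=
  flatten [seq [seq G k j | j <- enum 'I_m &
                   ((val k == 0%N) && (i <= val j)%N)
                   || ((0 < val k)%N && (val k < val j)%N)]
          | k <- enum 'I_m].

Definition sp1_orbit (V : seq (quat R)) : seq (quat R) -> Prop :=
  fun W => exists mu : quat R, qnormsq mu = 1 /\
    W = [seq qmul (qmul (qconj mu) v) mu | v <- V].

Definition gram_equiv (m : nat) (G1 G2 : 'I_m -> 'I_m -> quat R) : Prop :=
  exists d : 'I_m -> quat R, (forall k, d k <> qzero) /\
    forall k j, G1 k j = qmul (qmul (qconj (d k)) (G2 k j)) (d j).

End Quat.

From HB Require Import structures.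
From mathcomp Require Import all_boot all_order all_algebra.
From mathcomp Require Import reals.
From mathcomp Require Import ring zify.
From mathcomp Require boolp.
Import Order.TTheory GRing.Theory Num.Theory.
Local Open Scope ring_scope.

(* If G1 = D^* G2 D, the entries g_{1j} = 1 (2 <= j <= i) force conj(d_1) d_j = 1; the
   unimodular entry g_{23} then gives |d_1| = 1, and the diagonal entries -1 together
   with the positive reals r_{1j} give conj(d_1) d_j = 1 for j > i as well.  Hence
   D = mu I with mu in Sp(1), i.e. G1 = conj(mu) G2 mu entrywise.  Conversely, this
   conjugation fixes real entries and commutes with quaternionic conjugation, so on
   semi-normalized Hermitian matrices it is determined by the entries listed in V_G. *)

Section Quaternions.
Set Implicit Arguments. Unset Strict Implicit.
Variable R : realType.
Implicit Types (a b c mu nu v : quat R) (r : R) (V W : seq (quat R)).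

Lemma quat_ext a b :
  q0 a = q0 b -> q1 a = q1 b -> q2 a = q2 b -> q3 a = q3 b -> a = b.
Proof. by case: a b => ???? [????] /= -> -> -> ->. Qed.

Ltac quat_ring := apply: quat_ext => /=; ring.

Lemma qaddA : associative (@qadd R).
Proof. by move=> [????] [????] [????]; quat_ring. Qed.

Lemma qaddC : commutative (@qadd R).
Proof. by move=> [????] [????]; quat_ring. Qed.

Lemma qadd0q : left_id (qzero R) (@qadd R).
Proof. by move=> [????]; quat_ring. Qed.

HB.instance Definition _ :=
  Monoid.isComLaw.Build (quat R) (qzero R) (@qadd R) qaddA qaddC qadd0q.

Lemma qsumE s : qsum s = \big[@qadd R/qzero R]_(a <- s) a.
Proof. by elim: s => [|a s IHs]; rewrite ?big_nil ?big_cons //= IHs. Qed.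

Lemma qmulA a b c : qmul (qmul a b) c = qmul a (qmul b c).
Proof. by case: a b c => ???? [????] [????]; quat_ring. Qed.

Lemma qmul1q a : qmul (qone R) a = a.
Proof. by case: a => ????; quat_ring. Qed.

Lemma qmulq1 a : qmul a (qone R) = a.
Proof. by case: a => ????; quat_ring. Qed.

Lemma qmul_real r1 r2 : qmul (qreal r1) (qreal r2) = qreal (r1 * r2).
Proof. by quat_ring. Qed.

Lemma qmul_realC a r : qmul a (qreal r) = qmul (qreal r) a.
Proof. by case: a => ????; quat_ring. Qed.

Lemma qconjK : involutive (@qconj R).
Proof. by case=> ????; quat_ring. Qed.

Lemma qconjM a b : qconj (qmul a b) = qmul (qconj b) (qconj a).
Proof. by case: a b => ???? [????]; quat_ring. Qed.

Lemma qconjD a b : qconj (qadd a b) = qadd (qconj a) (qconj b).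
Proof. by case: a b => ???? [????]; quat_ring. Qed.

Lemma qconj0 : qconj (qzero R) = qzero R.
Proof. by quat_ring. Qed.

Lemma qmul_conjl a : qmul (qconj a) a = qreal (qnormsq a).
Proof. by case: a => ????; rewrite /qnormsq; quat_ring. Qed.

Lemma qmul_conjr a : qmul a (qconj a) = qreal (qnormsq a).
Proof. by case: a => ????; rewrite /qnormsq; quat_ring. Qed.

Lemma qnormsqM a b : qnormsq (qmul a b) = qnormsq a * qnormsq b.
Proof. by case: a b => ???? [????]; rewrite /qnormsq /=; ring. Qed.

Lemma qnormsq_conj a : qnormsq (qconj a) = qnormsq a.
Proof. by case: a => ????; rewrite /qnormsq /=; ring. Qed.

Lemma qnormsq_real r : qnormsq (qreal r) = r ^+ 2.
Proof. by rewrite /qnormsq /=; ring. Qed.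

Lemma qnormsq1 : qnormsq (qone R) = 1.
Proof. by rewrite /qnormsq /=; ring. Qed.

Lemma qnormsq_ge0 a : 0 <= qnormsq a.
Proof. by rewrite /qnormsq !addr_ge0 ?sqr_ge0. Qed.

Lemma qnormsq_sqr_eq1 a : qnormsq a ^+ 2 = 1 -> qnormsq a = 1.
Proof. by move/eqP; rewrite sqrp_eq1 ?qnormsq_ge0 // => /eqP. Qed.

Lemma qunit_conj_mul_eq1 a b :
  qnormsq a = 1 -> qmul (qconj a) b = qone R -> b = a.
Proof.
move=> Na ab1; rewrite -[b]qmul1q -[qone R]/(qreal 1) -Na -qmul_conjr.
by rewrite qmulA ab1 qmulq1.
Qed.

Lemma swap_flK n : involutive (@swap_fl n).
Proof.
move=> l; apply: val_inj; rewrite /swap_fl.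
have := ltn_ord l; case: l => l /= lt_ln.
by do ![case: ifP => /= /eqP] => *; lia.
Qed.

Lemma hform_conj n (z w : qvec R n) : hform z w = qconj (hform w z).
Proof.
rewrite /hform !qsumE !big_map (big_morph _ qconjD qconj0).
under [RHS]eq_bigr do rewrite qconjM qconjK.
rewrite (reindex_inj (can_inj (@swap_flK n))) /=.
by apply: eq_big => [l|l _]; rewrite ?swap_flK.
Qed.

Definition sp1_act mu v := qmul (qmul (qconj mu) v) mu.

Lemma sp1_actM mu nu v : sp1_act nu (sp1_act mu v) = sp1_act (qmul mu nu) v.
Proof. by rewrite /sp1_act qconjM !qmulA. Qed.

Lemma sp1_act1 v : sp1_act (qone R) v = v.
Proof. by case: v => ????; quat_ring. Qed.

Lemma sp1_act_real mu r : qnormsq mu = 1 -> sp1_act mu (qreal r) = qreal r.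
Proof. by move=> Nmu; rewrite /sp1_act qmul_realC qmulA qmul_conjl Nmu qmulq1. Qed.

Lemma sp1_act_conj mu v : qconj (sp1_act mu v) = sp1_act mu (qconj v).
Proof. by rewrite /sp1_act !qconjM qconjK !qmulA. Qed.

Lemma sp1_orbit_act mu V :
  qnormsq mu = 1 -> sp1_orbit (map (sp1_act mu) V) = sp1_orbit V.
Proof.
move=> Nmu; apply: boolp.funext => W.
apply: boolp.propext; split=> -[nu [Nnu ->]].
- exists (qmul mu nu); split; first by rewrite qnormsqM Nmu Nnu mulr1.
  by rewrite -map_comp; apply: eq_map => v; apply: sp1_actM.
- exists (qmul (qconj mu) nu).
  split; first by rewrite qnormsqM qnormsq_conj Nmu Nnu mulr1.
  rewrite -map_comp; apply: eq_map => v.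
  rewrite /= -[RHS]/(sp1_act _ (sp1_act mu v)) sp1_actM.
  by rewrite -qmulA qmul_conjr Nmu qmul1q.
Qed.

Lemma sp1_orbit_refl V : sp1_orbit V V.
Proof.
exists (qone R); split; first exact: qnormsq1.
by rewrite -[LHS]map_id; apply: eq_map => v; rewrite -[RHS]/(sp1_act _ v) sp1_act1.
Qed.

Lemma sp1_orbit_eqP V W :
  sp1_orbit V = sp1_orbit W <->
  exists2 mu, qnormsq mu = 1 & V = map (sp1_act mu) W.
Proof.
split=> [eqVW | [mu Nmu ->]]; last exact: sp1_orbit_act.
have [mu [Nmu VE]] : sp1_orbit W V by rewrite -eqVW; apply: sp1_orbit_refl.
by exists mu.
Qed.

Definition VG_index m i (k j : 'I_m) : bool :=
  ((val k == 0%N) && (i <= val j)%N) || ((0 < val k)%N && (val k < val j)%N).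

Lemma VG_map m i (G1 G2 : 'I_m -> 'I_m -> quat R) (f : quat R -> quat R) :
  (forall k j, G1 k j = f (G2 k j)) -> VG i G1 = map f (VG i G2).
Proof.
move=> G12; rewrite /VG map_flatten -map_comp; congr flatten.
by apply: eq_map => k /=; rewrite -map_comp; apply: eq_map => j; apply: G12.
Qed.

Lemma VG_inj m i (G1 G2 : 'I_m -> 'I_m -> quat R) :
  VG i G1 = VG i G2 -> forall k j, VG_index i k j -> G1 k j = G2 k j.
Proof.
rewrite /VG; set rows := fun G : 'I_m -> 'I_m -> quat R =>
  [seq [seq G k j | j <- enum 'I_m & VG_index i k j] | k <- enum 'I_m].
move=> eqV k j kj.
have eq_rows : rows G1 = rows G2.
  rewrite -(flattenK (rows G1)) -(flattenK (rows G2)) eqV; congr reshape.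
  by rewrite /shape -!map_comp; apply: eq_map => k' /=; rewrite !size_map.
have := (eq_in_map _ _ _).2 eq_rows k (mem_enum _ k).
by move/eq_in_map; apply; rewrite mem_filter kj mem_enum.
Qed.

Lemma semi_normalized_gram_conj n m i (G : 'I_m -> 'I_m -> quat R) :
  semi_normalized_gram n i G -> forall k j, G k j = qconj (G j k).
Proof. by move=> [p [_ [GE _]]] k j; rewrite !GE /gram hform_conj. Qed.

Section DiagonalFactor.
Variables (m i : nat) (G1 G2 : 'I_m -> 'I_m -> quat R) (d : 'I_m -> quat R).
Hypotheses (sn1 : semi_normalized i G1) (sn2 : semi_normalized i G2).
Hypothesis G12 : forall k j, G1 k j = qmul (qmul (qconj (d k)) (G2 k j)) (d j).
Variable k0 : 'I_m.
Hypothesis k0E : val k0 = 0%N.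

Lemma diag_factor_boundary k :
  (1 <= val k < i)%N -> qmul (qconj (d k0)) (d k) = qone R.
Proof.
have [_ [_ [row1 _]]] := sn1; have [_ [_ [row2 _]]] := sn2.
by move=> k_bd; have := G12 k0 k; rewrite row1 ?row2 // qmulq1.
Qed.

Lemma diag_factor0_unit : (2 < i <= m)%N -> qnormsq (d k0) = 1.
Proof.
move=> /andP[i_gt2 i_le_m].
have [_ [_ [_ [unit1 _]]]] := sn1; have [_ [_ [_ [unit2 _]]]] := sn2.
have m1 : (1 < m)%N by lia.
have m2 : (2 < m)%N by lia.
pose k1 := Ordinal m1; pose k2 := Ordinal m2.
have boundary_norm k : (1 <= val k < i)%N -> qnormsq (d k0) * qnormsq (d k) = 1.
  move=> k_bd; have := congr1 (@qnormsq R) (diag_factor_boundary k_bd).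
  by rewrite qnormsqM qnormsq_conj qnormsq1.
have N12 : qnormsq (d k1) * qnormsq (d k2) = 1.
  have := congr1 (@qnormsq R) (G12 k1 k2).
  by rewrite !qnormsqM qnormsq_conj unit1 ?unit2 // mulr1 => ->.
apply: qnormsq_sqr_eq1.
rewrite expr2 -[LHS]mulr1 -{1}N12 mulrACA.
by rewrite !boundary_norm ?mulr1 //=; lia.
Qed.

Lemma diag_factor_interior :
  qnormsq (d k0) = 1 ->
  forall k, (i <= val k)%N -> qmul (qconj (d k0)) (d k) = qone R.
Proof.
move=> N0 k k_in.
have [_ [diag1 [_ [_ row1]]]] := sn1; have [_ [diag2 [_ [_ row2]]]] := sn2.
have Nk : qnormsq (d k) = 1.
  apply: qnormsq_sqr_eq1; have := congr1 (@qnormsq R) (G12 k k).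
  rewrite diag1 ?diag2 // !qnormsqM qnormsq_conj qnormsq_real sqrrN expr1n.
  by rewrite mulr1 expr2.
have [r1 [r1_gt0 G1E]] := row1 k0 k k0E k_in.
have [r2 [r2_gt0 G2E]] := row2 k0 k k0E k_in.
have := G12 k0 k; rewrite G1E G2E qmul_realC qmulA.
have -> : r1 = r2.
  apply/eqP; rewrite -(eqrXn2 (_ : 0 < 2)%N) ?ltW //; apply/eqP.
  have := congr1 (@qnormsq R) (G12 k0 k).
  by rewrite G1E G2E !qnormsqM qnormsq_conj !qnormsq_real N0 Nk mul1r mulr1.
move=> /(congr1 (qmul (qreal r2^-1))).
by rewrite -qmulA !qmul_real mulVf ?gt_eqF // qmul1q => <-.
Qed.

Lemma diag_factor_const : (2 < i <= m)%N -> forall k, d k = d k0.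
Proof.
move=> i_bd k; have N0 := diag_factor0_unit i_bd.
apply: qunit_conj_mul_eq1 => //.
case: (ltnP (val k) i) => [k_lt_i | k_ge_i]; last exact: diag_factor_interior.
have [k_eq0 | k_gt0] := posnP (val k).
  by rewrite (_ : k = k0) ?qmul_conjl ?N0 //; apply: val_inj; rewrite k_eq0 k0E.
by apply: diag_factor_boundary; rewrite k_gt0.
Qed.

End DiagonalFactor.

Lemma gram_equivP m i (G1 G2 : 'I_m -> 'I_m -> quat R) :
  semi_normalized i G1 -> semi_normalized i G2 -> (2 < i <= m)%N ->
  gram_equiv G1 G2 <->
  exists2 mu, qnormsq mu = 1 & forall k j, G1 k j = sp1_act mu (G2 k j).
Proof.
move=> sn1 sn2 i_bd; split=> [[d [_ G12]] | [mu Nmu G12]].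
  have m_gt0 : (0 < m)%N by case/andP: i_bd => ??; lia.
  pose k0 := Ordinal m_gt0.
  exists (d k0); first exact: (diag_factor0_unit sn1 sn2 G12 (k0 := k0)).
  have dE := diag_factor_const sn1 sn2 G12 (k0 := k0) erefl i_bd.
  by move=> k j; rewrite G12 !dE.
exists (fun=> mu); split=> // k mu0.
by move: Nmu; rewrite mu0 /qnormsq /= expr0n !addr0 => /eqP; rewrite eq_sym oner_eq0.
Qed.

Lemma sp1_act_VG_index_extend m i (G1 G2 : 'I_m -> 'I_m -> quat R) mu :
  semi_normalized i G1 -> semi_normalized i G2 -> qnormsq mu = 1 ->
  (forall k j, G1 k j = qconj (G1 j k)) -> (forall k j, G2 k j = qconj (G2 j k)) ->
  (forall k j, VG_index i k j -> G1 k j = sp1_act mu (G2 k j)) ->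
  forall k j, G1 k j = sp1_act mu (G2 k j).
Proof.
move=> [bd1 [diag1 [row1 _]]] [bd2 [diag2 [row2 _]]] Nmu herm1 herm2 G12.
have upper k j : (val k <= val j)%N -> G1 k j = sp1_act mu (G2 k j).
  rewrite leq_eqVlt => /orP[/eqP/val_inj <- | k_lt_j].
    case: (ltnP (val k) i) => k_i.
      by rewrite bd1 ?bd2 ?(sp1_act_real 0 Nmu).
    by rewrite diag1 ?diag2 ?sp1_act_real.
  have [k_eq0 | k_gt0] := posnP (val k); last first.
    by apply: G12; rewrite /VG_index k_gt0 k_lt_j orbT.
  case: (ltnP (val j) i) => j_i; last by apply: G12; rewrite /VG_index k_eq0 j_i.
  have j_bd : (1 <= val j < i)%N by rewrite j_i andbT -k_eq0.
  by rewrite row1 ?row2 // -[qone R]/(qreal 1) sp1_act_real.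
move=> k j; case: (leqP (val k) (val j)) => [/upper // | /ltnW/upper j_k].
by rewrite herm1 j_k sp1_act_conj -herm2.
Qed.

Lemma VG_sp1_actP m i (G1 G2 : 'I_m -> 'I_m -> quat R) mu :
  semi_normalized i G1 -> semi_normalized i G2 -> qnormsq mu = 1 ->
  (forall k j, G1 k j = qconj (G1 j k)) -> (forall k j, G2 k j = qconj (G2 j k)) ->
  VG i G1 = map (sp1_act mu) (VG i G2) <->
  forall k j, G1 k j = sp1_act mu (G2 k j).
Proof.
move=> sn1 sn2 Nmu herm1 herm2; split; last exact: VG_map.
rewrite -(@VG_map _ _ (fun k j => sp1_act mu (G2 k j))) // => /VG_inj.
exact: sp1_act_VG_index_extend.
Qed.

End Quaternions.

Theorem lemma8p7 (R : realType) (n m i : nat) (hn : (0 < n)%N)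
    (hm : (4 <= m)%N) (hi : (3 <= i <= m)%N)
    (G1 G2 : 'I_m -> 'I_m -> quat R) :
  semi_normalized_gram n i G1 -> semi_normalized_gram n i G2 ->
  (gram_equiv G1 G2 <-> sp1_orbit (VG i G1) = sp1_orbit (VG i G2)).
Proof.
move=> gram1 gram2.
have [_ [_ [_ sn1]]] := gram1; have [_ [_ [_ sn2]]] := gram2.
have herm1 := semi_normalized_gram_conj gram1.
have herm2 := semi_normalized_gram_conj gram2.
rewrite sp1_orbit_eqP; apply: iff_trans (gram_equivP sn1 sn2 hi) _.
by split=> -[mu Nmu G12]; exists mu => //;
  apply/(VG_sp1_actP sn1 sn2 Nmu herm1 herm2).
Qed.
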